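(* Let $S=(P,L)$ be a $(2,t)$-generalized quadrangle and let $(R,\psi)$ be a representation of $S$. Then $R$ is an elementary abelian $2$-group.
   Context: A $(2,t)$-generalized quadrangle is a partial linear space (two distinct points on at most one line) in which every line has exactly $3$ points, every point lies on exactly $t+1$ lines, no point is collinear with all points, and for every point $x$ and line $\ell$ with $x\notin\ell$, $x$ is collinear with exactly one point of $\ell$. A representation $(R,\psi)$ of $S$ is a group $R$ together with a map $\psi$ assigning to each point $x$ a subgroup $\psi(x)=\langle r_x\rangle$ of order $2$, such that $R$ is generated by $\{r_x:x\in P\}$ and, for every line $\{x,y,z\}$, $\{1,r_x,r_y,r_z\}$ is a Klein four subgroup of $R$. *)

From Stdlib Require Import List.
Import ListNotations.

Definition has_card {T : Type} (A : T -> Prop) (n : nat) : Prop :=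
  exists s : list T, NoDup s /\ length s = n /\ forall x, A x <-> In x s.

Definition collinear {P L : Type} (I : P -> L -> Prop) (x y : P) : Prop :=
  exists l, I x l /\ I y l.

Definition is_GQ_2t {P L : Type} (I : P -> L -> Prop) (t : nat) : Prop :=
  (forall x y l m, x <> y -> I x l -> I y l -> I x m -> I y m -> l = m) /\
  (forall l, has_card (fun x => I x l) 3) /\
  (forall x, has_card (fun l => I x l) (t + 1)) /\
  (forall x, exists y, ~ collinear I x y) /\
  (forall x l, ~ I x l ->
     exists y, (I y l /\ collinear I x y) /\
       forall y', I y' l -> collinear I x y' -> y' = y).

Definition is_group {G : Type} (mul : G -> G -> G) (inv : G -> G) (e : G) : Prop :=
  (forall a b c, mul a (mul b c) = mul (mul a b) c) /\
  (forall a, mul e a = a) /\ (forall a, mul a e = a) /\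
  (forall a, mul (inv a) a = e) /\ (forall a, mul a (inv a) = e).

Definition is_subgroup {G : Type} (mul : G -> G -> G) (inv : G -> G) (e : G)
  (H : G -> Prop) : Prop :=
  H e /\ (forall a b, H a -> H b -> H (mul a b)) /\ (forall a, H a -> H (inv a)).

Definition generated_by {G X : Type} (mul : G -> G -> G) (inv : G -> G) (e : G)
  (gen : X -> G) : Prop :=
  forall H : G -> Prop, is_subgroup mul inv e H -> (forall x, H (gen x)) ->
    forall g, H g.

Definition order_two {G : Type} (mul : G -> G -> G) (e : G) (a : G) : Prop :=
  a <> e /\ mul a a = e.

Definition klein_four {G : Type} (mul : G -> G -> G) (e : G) (a b c : G) : Prop :=
  let K := fun g => g = e \/ g = a \/ g = b \/ g = c in
  NoDup [e; a; b; c] /\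
  (forall g h, K g -> K h -> K (mul g h)) /\
  (forall g, K g -> mul g g = e).

(* A representation (R, psi) of the incidence structure: psi x = <r x>
   of order 2, R generated by the r x, and each line {x,y,z} gives a Klein
   four subgroup {1, r x, r y, r z}. *)
Definition is_representation {P L G : Type} (I : P -> L -> Prop)
  (mul : G -> G -> G) (inv : G -> G) (e : G) (r : P -> G) : Prop :=
  (forall x, order_two mul e (r x)) /\
  generated_by mul inv e r /\
  (forall l x y z, I x l -> I y l -> I z l -> x <> y -> y <> z -> x <> z ->
     klein_four mul e (r x) (r y) (r z)).

Definition elementary_abelian_2 {G : Type} (mul : G -> G -> G) (e : G) : Prop :=
  (forall a b, mul a b = mul b a) /\ (forall a, mul a a = e).

From Stdlib Require Import Arith List Classical.
Import ListNotations.

(* If x and y are collinear, r x and r y lie in a common Klein four group, so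
   they commute.  Otherwise take two lines {y, u1, w1}, {y, u2, w2} through y
   and the lines {x, u1, v1}, {x, u2, v2} joining x to them.  The GQ axiom
   makes v2 collinear with w1, the third point q of that line collinear with
   v1 and w2, and {v1, w2, q} a line.  Computing r q along the lines
   {v2, w1, q} and {v1, w2, q} yields relations between r x, r u1, r u2, r y
   that force r x and r y to commute.  Thus R is generated by pairwise
   commuting involutions. *)

Section Group.
Context {G : Type} (mul : G -> G -> G) (inv : G -> G) (e : G).
Hypothesis group : is_group mul inv e.

Lemma mulgA a b c : mul a (mul b c) = mul (mul a b) c.
Proof. destruct group as (A & _); apply A. Qed.

Lemma mul1g a : mul e a = a.
Proof. destruct group as (_ & E & _); apply E. Qed.

Lemma mulg1 a : mul a e = a.
Proof. destruct group as (_ & _ & E & _); apply E. Qed.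

Lemma mulVg a : mul (inv a) a = e.
Proof. destruct group as (_ & _ & _ & V & _); apply V. Qed.

Lemma mulgV a : mul a (inv a) = e.
Proof. destruct group as (_ & _ & _ & _ & V); apply V. Qed.

Lemma mulg_cancel_l g h k : mul g h = mul g k -> h = k.
Proof. intros E. now rewrite <- (mul1g h), <- (mul1g k), <- (mulVg g), <- !mulgA, E. Qed.

Lemma mulg_cancel_r g h k : mul h g = mul k g -> h = k.
Proof. intros E. now rewrite <- (mulg1 h), <- (mulg1 k), <- (mulgV g), !mulgA, E. Qed.

Lemma mul_involution_neq a b : a <> e -> b <> e -> a <> b -> mul b b = e ->
  mul a b <> e /\ mul a b <> a /\ mul a b <> b.
Proof.
  intros ae be ab bb; repeat split; intros E.
  - apply ab. now rewrite <- (mulg1 a), <- bb, mulgA, E, mul1g.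
  - apply be, (mulg_cancel_l a). now rewrite E, mulg1.
  - apply ae, (mulg_cancel_r b). now rewrite E, mul1g.
Qed.

Lemma klein_four_mul a b c : klein_four mul e a b c -> mul a b = c /\ mul b a = c.
Proof.
  intros (nodup & closed & square).
  assert (Ka : a = e \/ a = a \/ a = b \/ a = c) by auto.
  assert (Kb : b = e \/ b = a \/ b = b \/ b = c) by auto.
  apply NoDup_cons_iff in nodup as [ne nodup]; apply NoDup_cons_iff in nodup as [na nodup];
    apply NoDup_cons_iff in nodup as [nb _]; simpl in ne, na, nb.
  destruct (mul_involution_neq a b) as (abe & aba & abb); try (intro; subst; tauto);
    [apply square; auto|].
  destruct (mul_involution_neq b a) as (bae & bab & baa); try (intro; subst; tauto);
    [apply square; auto|].
  split; [destruct (closed a b Ka Kb) | destruct (closed b a Kb Ka)]; tauto.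
Qed.

Lemma commute_of_relations a b c d :
  mul a b = mul b a -> mul b d = mul d b -> mul c d = mul d c ->
  mul (mul a c) (mul d b) = mul (mul a b) (mul c d) ->
  mul (mul a c) (mul d b) = mul (mul d b) (mul a c) ->
  mul a d = mul d a.
Proof.
  intros ab bd cd acdb_abcd acdb_dbac.
  assert (bc : mul b c = mul c b).
  { apply (mulg_cancel_r d), (mulg_cancel_l a).
    rewrite <- (mulgA b c d), (mulgA a b), <- acdb_abcd, <- bd.
    now rewrite <- !mulgA. }
  apply (mulg_cancel_r (mul c b)).
  transitivity (mul (mul a c) (mul d b)).
  - now rewrite <- !mulgA, (mulgA d c), <- cd, !mulgA.
  - rewrite acdb_dbac, <- !mulgA, (mulgA b a), <- ab, <- bc. now rewrite !mulgA.
Qed.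

Definition centralizer (S : G -> Prop) (g : G) : Prop :=
  forall h, S h -> mul g h = mul h g.

Lemma is_subgroup_centralizer S : is_subgroup mul inv e (centralizer S).
Proof.
  repeat split.
  - intros h _. now rewrite mul1g, mulg1.
  - intros g k Cg Ck h Sh. now rewrite <- mulgA, (Ck h Sh), mulgA, (Cg h Sh), mulgA.
  - intros g Cg h Sh. apply (mulg_cancel_r g).
    now rewrite <- !mulgA, <- (Cg h Sh), mulVg, mulg1, mulgA, mulVg, mul1g.
Qed.

Lemma abelian_of_generators_commute {X : Type} (gen : X -> G) :
  generated_by mul inv e gen ->
  (forall x y, mul (gen x) (gen y) = mul (gen y) (gen x)) ->
  forall g h, mul g h = mul h g.
Proof.
  intros generated gen_commute.
  assert (central_gen : forall g, centralizer (fun h => exists x, h = gen x) g).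
  { apply generated; [apply is_subgroup_centralizer|].
    intros x h [y ->]. apply gen_commute. }
  intros g h. apply (generated (centralizer (fun _ => True))); auto.
  - apply is_subgroup_centralizer.
  - intros x k _. symmetry. apply central_gen. eauto.
Qed.

Lemma elementary_abelian_2_of_generators {X : Type} (gen : X -> G) :
  generated_by mul inv e gen ->
  (forall x y, mul (gen x) (gen y) = mul (gen y) (gen x)) ->
  (forall x, mul (gen x) (gen x) = e) ->
  elementary_abelian_2 mul e.
Proof.
  intros generated gen_commute gen_square.
  pose proof (abelian_of_generators_commute gen generated gen_commute) as comm.
  split; [exact comm|].
  apply generated; [|exact gen_square].
  repeat split.
  - apply mul1g.
  - intros g h gg hh. now rewrite <- mulgA, (mulgA h g), (comm h g), <- mulgA, hh, mulg1.
  - intros g gg. assert (inv_g : inv g = g).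
    { now rewrite <- (mulg1 (inv g)), <- gg, mulgA, mulVg, mul1g. }
    now rewrite inv_g.
Qed.

End Group.

Section Quadrangle.
Context {P L : Type} (I : P -> L -> Prop).
Hypothesis unique_line : forall x y l m, x <> y -> I x l -> I y l -> I x m -> I y m -> l = m.
Hypothesis three_points : forall l, has_card (fun x => I x l) 3.
Hypothesis gq_axiom : forall x l, ~ I x l ->
  exists y, (I y l /\ collinear I x y) /\ forall y', I y' l -> collinear I x y' -> y' = y.

(* Lines have exactly three points, so this says that {a, b, c} is a line. *)
Definition is_line (a b c : P) : Prop :=
  exists l, I a l /\ I b l /\ I c l /\ a <> b /\ b <> c /\ a <> c.

Lemma line_points l : exists a b c, a <> b /\ b <> c /\ a <> c /\
  forall z, I z l <-> z = a \/ z = b \/ z = c.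
Proof.
  destruct (three_points l) as ([|a [|b [|c [|]]]] & nodup & len & mem); try discriminate.
  apply NoDup_cons_iff in nodup as [na nodup]; apply NoDup_cons_iff in nodup as [nb _].
  exists a, b, c. simpl in na, nb.
  split; [|split; [|split]]; try (intros ->; tauto).
  intros x. rewrite mem. simpl. intuition congruence.
Qed.

Lemma line_third_point a b l : a <> b -> I a l -> I b l ->
  exists c, I c l /\ c <> a /\ c <> b.
Proof.
  intros ab al bl. destruct (line_points l) as (p1 & p2 & p3 & d12 & d23 & d13 & mem).
  apply mem in al, bl.
  destruct al as [-> | [-> | ->]]; destruct bl as [-> | [-> | ->]]; try congruence;
    [exists p3 | exists p2 | exists p3 | exists p1 | exists p2 | exists p1];
    (split; [rewrite mem; auto | split; congruence]).
Qed.

Lemma line_point_cases l a b c z : I a l -> I b l -> I c l ->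
  a <> b -> b <> c -> a <> c -> I z l -> z = a \/ z = b \/ z = c.
Proof.
  intros al bl cl ab bc ac zl.
  destruct (classic (z = a \/ z = b \/ z = c)) as [|other]; [assumption|exfalso].
  destruct (three_points l) as (s & _ & len & mem).
  assert (nodup : NoDup [z; a; b; c]) by (repeat constructor; simpl; intuition congruence).
  assert (four_le_three : length [z; a; b; c] <= length s).
  { apply NoDup_incl_length; [exact nodup|]. intros x x_in. apply mem.
    simpl in x_in. intuition congruence. }
  rewrite len in four_le_three. exact (Nat.nle_succ_diag_l 3 four_le_three).
Qed.

Lemma collinear_remaining_point p a b c : is_line a b c ->
  ~ collinear I p a -> ~ collinear I p b -> collinear I p c /\ p <> c.
Proof.
  intros (l & al & bl & cl & ab & bc & ac) pa pb.
  assert (pl : ~ I p l) by (intro; apply pa; exists l; auto).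
  destruct (gq_axiom p l pl) as (y & (yl & py) & _).
  split; [|intros ->; contradiction].
  destruct (line_point_cases l a b c y al bl cl ab bc ac yl) as [-> | [-> | ->]];
    tauto.
Qed.

Lemma no_triangle a b c : a <> b -> b <> c -> a <> c ->
  collinear I a b -> collinear I b c -> collinear I a c -> is_line a b c.
Proof.
  intros ab bc ac [l [al bl]] bc_col ac_col. exists l; repeat split; auto.
  destruct (classic (I c l)) as [|cl]; [assumption|].
  destruct (gq_axiom c l cl) as (y & _ & uniq).
  assert (a = y) by (apply uniq; auto; destruct ac_col as [m []]; exists m; auto).
  assert (b = y) by (apply uniq; auto; destruct bc_col as [m []]; exists m; auto).
  congruence.
Qed.

Lemma projection_point x l : ~ I x l ->
  exists u m, I u l /\ I x m /\ I u m /\ x <> u /\ m <> l.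
Proof.
  intros xl. destruct (gq_axiom x l xl) as (u & (ul & m & xm & um) & _).
  exists u, m. repeat split; auto; intros ->; contradiction.
Qed.

Lemma not_collinear_of_concurrent p a b l m : l <> m -> I p l -> I p m ->
  I a l -> I b m -> a <> p -> b <> p -> ~ collinear I a b.
Proof.
  intros lm pl pm al bm ap bp ab_col.
  assert (ab : a <> b) by (intros <-; exact (lm (unique_line a p l m ap al pl bm pm))).
  destruct (no_triangle a b p) as (k & ak & bk & pk & _); auto.
  - exists m; auto.
  - exists l; auto.
  - apply lm. now rewrite <- (unique_line a p k l), (unique_line b p k m).
Qed.

Variable t : nat.
Hypothesis point_degree : forall x, has_card (fun l => I x l) (t + 1).

Lemma two_lines_through x y : ~ collinear I x y ->
  exists l1 l2, l1 <> l2 /\ I y l1 /\ I y l2.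
Proof.
  intros xy.
  destruct (point_degree y) as ([|l1 [|l2 s]] & nodup & len & mem);
    rewrite Nat.add_1_r in len; try discriminate.
  - exfalso. injection len as <-.
    assert (yl : I y l1) by (apply mem; now left).
    assert (xl : ~ I x l1) by (intro; apply xy; exists l1; auto).
    destruct (gq_axiom x l1 xl) as (u & (ul & m & xm & um) & _).
    destruct (point_degree u) as ([|k [|]] & _ & len_u & mem_u); try discriminate.
    apply mem_u in ul as [<- | []]. apply mem_u in um as [<- | []]. contradiction.
  - exists l1, l2. apply NoDup_cons_iff in nodup as [l1_notin _].
    repeat split; [intros <-; apply l1_notin; now left | apply mem; simpl; auto ..].
Qed.

Lemma quadrangle_configuration x y : ~ collinear I x y ->
  exists u1 u2 v1 v2 w1 w2 q,
    is_line x u1 v1 /\ is_line x u2 v2 /\ is_line y u1 w1 /\ is_line y u2 w2 /\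
    is_line v2 w1 q /\ is_line v1 w2 q.
Proof.
  intros xy.
  destruct (two_lines_through x y xy) as (l1 & l2 & l12 & yl1 & yl2).
  assert (xl1 : ~ I x l1) by (intro; apply xy; exists l1; auto).
  assert (xl2 : ~ I x l2) by (intro; apply xy; exists l2; auto).
  destruct (projection_point x l1 xl1) as (u1 & m1 & u1l1 & xm1 & u1m1 & xu1 & m1l1).
  destruct (projection_point x l2 xl2) as (u2 & m2 & u2l2 & xm2 & u2m2 & xu2 & m2l2).
  assert (yu1 : y <> u1) by (intros ->; apply xy; exists m1; auto).
  assert (yu2 : y <> u2) by (intros ->; apply xy; exists m2; auto).
  assert (m12 : m1 <> m2).
  { intros <-. apply (not_collinear_of_concurrent y u1 u2 l1 l2); auto.
    exists m1; auto. }
  destruct (line_third_point x u1 m1) as (v1 & v1m1 & v1x & v1u1); auto.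
  destruct (line_third_point x u2 m2) as (v2 & v2m2 & v2x & v2u2); auto.
  destruct (line_third_point y u1 l1) as (w1 & w1l1 & w1y & w1u1); auto.
  destruct (line_third_point y u2 l2) as (w2 & w2l2 & w2y & w2u2); auto.
  assert (yu1w1 : is_line y u1 w1) by (exists l1; auto 10).
  assert (yu2w2 : is_line y u2 w2) by (exists l2; auto 10).
  assert (v1_y : ~ collinear I v1 y) by (apply (not_collinear_of_concurrent u1 _ _ m1 l1); auto).
  assert (v1_u2 : ~ collinear I v1 u2) by (apply (not_collinear_of_concurrent x _ _ m1 m2); auto).
  assert (v1_v2 : ~ collinear I v1 v2) by (apply (not_collinear_of_concurrent x _ _ m1 m2); auto).
  assert (v1_w1 : ~ collinear I v1 w1) by (apply (not_collinear_of_concurrent u1 _ _ m1 l1); auto).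
  assert (v2_y : ~ collinear I v2 y) by (apply (not_collinear_of_concurrent u2 _ _ m2 l2); auto).
  assert (v2_u1 : ~ collinear I v2 u1) by (apply (not_collinear_of_concurrent x _ _ m2 m1); auto).
  assert (w2_v2 : ~ collinear I w2 v2) by (apply (not_collinear_of_concurrent u2 _ _ l2 m2); auto).
  assert (w2_w1 : ~ collinear I w2 w1) by (apply (not_collinear_of_concurrent y _ _ l2 l1); auto).
  destruct (collinear_remaining_point v2 y u1 w1) as ((n & v2n & w1n) & v2w1); auto.
  destruct (line_third_point v2 w1 n) as (q & qn & qv2 & qw1); auto.
  assert (v2w1q : is_line v2 w1 q) by (exists n; auto 10).
  destruct (collinear_remaining_point v1 v2 w1 q) as (v1_q & v1q); auto.
  destruct (collinear_remaining_point w2 v2 w1 q) as ((k & w2k & qk) & w2q); auto.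
  destruct (collinear_remaining_point v1 y u2 w2) as (v1_w2 & v1w2); auto.
  exists u1, u2, v1, v2, w1, w2, q.
  repeat split; auto; [exists m1; auto 10 | exists m2; auto 10 |].
  apply no_triangle; auto. exists k; auto.
Qed.

End Quadrangle.

Section Representation.
Context {P L G : Type} (I : P -> L -> Prop).
Context (mul : G -> G -> G) (inv : G -> G) (e : G) (r : P -> G).
Hypothesis group : is_group mul inv e.
Hypothesis representation : is_representation I mul inv e r.

Lemma representation_line_mul a b c : is_line I a b c ->
  mul (r a) (r b) = r c /\ mul (r b) (r a) = r c.
Proof.
  intros (l & al & bl & cl & ab & bc & ac).
  apply (klein_four_mul mul inv e group).
  destruct representation as (_ & _ & klein). exact (klein l a b c al bl cl ab bc ac).
Qed.

Variable t : nat.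
Hypothesis quadrangle : is_GQ_2t I t.

Lemma representation_generators_commute x y : mul (r x) (r y) = mul (r y) (r x).
Proof.
  destruct quadrangle as (unique_line & three_points & point_degree & _ & gq_axiom).
  destruct (classic (x = y)) as [<- | xy]; [reflexivity|].
  destruct (classic (collinear I x y)) as [(l & xl & yl) | opposite].
  - destruct (line_third_point I three_points x y l xy xl yl) as (z & zl & zx & zy).
    destruct (representation_line_mul x y z) as [-> ->]; [exists l; auto 10 | reflexivity].
  - destruct (quadrangle_configuration I unique_line three_points gq_axiom t point_degree
      x y opposite) as (u1 & u2 & v1 & v2 & w1 & w2 & q & xu1v1 & xu2v2 & yu1w1 & yu2w2 & v2w1q & v1w2q).
    apply representation_line_mul in xu1v1, xu2v2, yu1w1, yu2w2, v2w1q, v1w2q.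
    apply (commute_of_relations mul inv e group (r x) (r u1) (r u2) (r y)); intuition congruence.
Qed.

End Representation.

Theorem proposition3p1 (P L : Type) (I : P -> L -> Prop) (t : nat)
  (G : Type) (mul : G -> G -> G) (inv : G -> G) (e : G) (r : P -> G) :
  is_GQ_2t I t ->
  is_group mul inv e ->
  is_representation I mul inv e r ->
  elementary_abelian_2 mul e.
Proof.
  intros quadrangle group representation.
  pose proof representation as (involutions & generated & _).
  apply (elementary_abelian_2_of_generators mul inv e group r generated).
  - exact (representation_generators_commute I mul inv e r group representation t quadrangle).
  - intros x. apply involutions.
Qed.
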